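(* Let $d \geq 3$, let $C \subset \mathbb{R}^d$ be a smooth $d$-dimensional combinatorial cube with faces labeled $F_I^J$ via a fixed face-poset isomorphism with $[0,1]^d$, and fix $x,y \in \{1,\dots,d\}$ with $x \neq y$. Consider the four $(d-2)$-dimensional faces $F_{xy}, F_{x\bar y}, F_{\bar x y}, F_{\bar x \bar y}$. If three of them are parallel to each other, then the fourth is parallel to them as well.
   Context: A lattice polytope is the convex hull of finitely many points of $\mathbb{Z}^d$. A $d$-dimensional polytope is simple if each vertex lies in exactly $d$ edges; the primitive edge directions at a vertex are the smallest lattice vectors along its incident edges; a $d$-dimensional lattice polytope in $\mathbb{R}^d$ is smooth if it is simple and at every vertex the primitive edge directions form a basis of $\mathbb{Z}^d$. A $d$-dimensional combinatorial cube is a polytope $C$ whose face poset is isomorphic to that of $[0,1]^d$. For disjoint $I,J \subseteq \{1,\dots,d\}$ the face of $[0,1]^d$ given by $x_k=0$ for $k\in I$ and $x_k = 1$ for $k \in J$ is denoted $F_I^J$, and the corresponding face of $C$ is also denoted $F_I^J$. Elements of $J$ are written with a bar and elements of $I$ without, e.g. $F_{x\bar y} = F_{\{x\}}^{\{y\}}$, $F_{\bar x\bar y} = F_{\emptyset}^{\{x,y\}}$. Two faces $F,G$ are parallel if $\mathrm{lin}(F)=\mathrm{lin}(G)$, where $\mathrm{lin}(F)$ is the linear subspace parallel to the affine hull of $F$. *)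

From HB Require Import structures.
From mathcomp Require Import all_boot all_order all_algebra.
From mathcomp Require Import boolp classical_sets reals.
Set Implicit Arguments. Unset Strict Implicit. Unset Printing Implicit Defensive.
Import Order.TTheory GRing.Theory Num.Theory.
Local Open Scope ring_scope.
Local Open Scope classical_set_scope.

Section Defs.
Variables (R : realType) (d : nat).
Notation vec := 'rV[R]_d.

Definition lattice (p : vec) : Prop := forall i, p 0 i \is a Num.int.

Definition dotv (c p : vec) : R := \sum_(i < d) c 0 i * p 0 i.

Definition conv (V : seq vec) : set vec :=
  [set p | exists w : 'I_(size V) -> R,
     (forall i, 0 <= w i) /\ \sum_i w i = 1 /\ p = \sum_i w i *: V`_i].

Definition lattice_polytope (P : set vec) : Prop :=
  exists V : seq vec, (forall v, v \in V -> lattice v) /\ P = conv V.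

(* faces: intersections with valid linear inequalities (includes the empty
   face and P itself) *)
Definition face (P F : set vec) : Prop :=
  exists (c : vec) (b : R), (forall p, P p -> dotv c p <= b) /\
    F = P `&` [set p | dotv c p = b].

(* lin(F): the linear subspace parallel to the affine hull of F *)
Definition lin (F : set vec) : set vec :=
  [set v | exists (n : nat) (a : 'I_n -> R) (p q : 'I_n -> vec),
     (forall i, F (p i) /\ F (q i)) /\ v = \sum_i a i *: (p i - q i)].

Definition parallel (F G : set vec) : Prop := lin F = lin G.

Definition full_dim (P : set vec) : Prop := lin P = setT.

Definition vertex (P : set vec) (v : vec) : Prop := face P [set v].

Definition edge (P E : set vec) : Prop :=
  face P E /\ exists u : vec, u != 0 /\ lin E = [set t *: u | t in [set: R]].

Definition edges_at (P : set vec) (v : vec) (E : 'I_d -> set vec) : Prop :=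
  injective E /\ (forall i, edge P (E i) /\ E i v) /\
  (forall F, edge P F -> F v -> exists i, F = E i).

Definition simple (P : set vec) : Prop :=
  forall v, vertex P v -> exists E, edges_at P v E.

Definition prim_dir (v : vec) (E : set vec) (u : vec) : Prop :=
  lattice u /\ u != 0 /\ (exists t : R, 0 < t /\ E (v + t *: u)) /\
  (forall s : R, 0 < s -> lattice (s *: u) -> 1 <= s).

Definition Zbasis (u : 'I_d -> vec) : Prop :=
  (forall z, lattice z <->
     exists a : 'I_d -> R, (forall i, a i \is a Num.int) /\ z = \sum_i a i *: u i) /\
  (forall a : 'I_d -> R, \sum_i a i *: u i = 0 -> forall i, a i = 0).

(* smooth (assumes P is a d-dimensional lattice polytope in R^d) *)
Definition smooth (P : set vec) : Prop :=
  simple P /\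
  forall v E, vertex P v -> edges_at P v E ->
    exists u : 'I_d -> vec, (forall i, prim_dir v (E i) (u i)) /\ Zbasis u.

Definition unit_cube : set vec := [set p | forall i, 0 <= p 0 i <= 1].

Definition face_iso (C : set vec) (phi : set vec -> set vec) : Prop :=
  (forall F, face unit_cube F -> face C (phi F)) /\
  (forall G, face C G -> exists2 F, face unit_cube F & G = phi F) /\
  (forall F G, face unit_cube F -> face unit_cube G ->
     (F `<=` G <-> phi F `<=` phi G)).

Definition cubeF (I J : {set 'I_d}) : set vec :=
  [set p | unit_cube p /\ (forall k, k \in I -> p 0 k = 0) /\
                          (forall k, k \in J -> p 0 k = 1)].

(* the four faces F_{xy}, F_{x ybar}, F_{xbar y}, F_{xbar ybar} of C,
   labelled through phi *)
Definition quad (phi : set vec -> set vec) (x y : 'I_d) : 'I_4 -> set vec :=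
  fun i => nth set0
    [:: phi (cubeF [set x; y] finset.set0); phi (cubeF [set x] [set y]);
        phi (cubeF [set y] [set x]); phi (cubeF finset.set0 [set x; y])] i.

End Defs.

From HB Require Import structures.
From mathcomp Require Import all_boot all_order all_algebra.
From mathcomp Require Import boolp classical_sets reals.
From mathcomp Require Import zify.
Set Implicit Arguments. Unset Strict Implicit. Unset Printing Implicit Defensive.
Import Order.TTheory GRing.Theory Num.Theory.
Local Open Scope ring_scope.
Local Open Scope classical_set_scope.

(* Let E_ab be the face of C labelled by x = a, y = b.
   Dimensions of linear hulls strictly increase along chains of faces of C, so
   each E_ab has dimension at least d - 2 and the facets {x = a}, {y = b} have
   dimension at most d - 1. If lin E_ab differed from lin E_(~a)b = lin E_a(~b),
   then lin E_ab + lin E_(~a)b, of dimension d - 1, would be the linear hull of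
   both facets {y = b} and {x = a}; two faces through a common point with equal
   linear hulls coincide, contradicting the face-poset isomorphism. *)

Lemma addv_eq_of_dim (K : fieldType) (vT : vectType K) (U V W : {vspace vT}) m :
  (m <= \dim U)%N -> (m <= \dim V)%N -> U != V ->
  (U + V <= W)%VS -> (\dim W <= m.+1)%N -> (U + V)%VS = W.
Proof.
move=> mU mV UV UVW Wm; apply/eqP; rewrite eqEdim UVW (leq_trans Wm) //.
rewrite ltnNge; apply: contra UV => UVm.
have eqUV (X : {vspace vT}) : (X <= U + V)%VS -> (m <= \dim X)%N -> X = (U + V)%VS.
  by move=> XUV mX; apply/eqP; rewrite eqEdim XUV (leq_trans UVm).
by apply/eqP; rewrite (eqUV U (addvSl _ _) mU) -(eqUV V (addvSr _ _) mV).
Qed.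

Section LinearHull.
Variables (R : realType) (d : nat).
Notation vec := 'rV[R]_d.
Implicit Types (F G : set vec) (u v : vec).

Lemma lin0 F : lin F 0.
Proof.
exists 0%N, (fun _ => 0), (fun _ => 0), (fun _ => 0).
by split=> [[]//|]; rewrite big_ord0.
Qed.

Lemma linD F u v : lin F u -> lin F v -> lin F (u + v).
Proof.
move=> [m [a [p [q [Fpq ->]]]]] [n [b [p' [q' [Fpq' ->]]]]].
pose glue T (f : 'I_m -> T) (g : 'I_n -> T) i :=
  match split i with inl j => f j | inr j => g j end.
exists (m + n)%N, (glue _ a b), (glue _ p p'), (glue _ q q'); split.
  by move=> i; rewrite /glue; case: (split i).
by rewrite big_split_ord /glue; congr (_ + _); apply: eq_bigr => i _;
  rewrite ?(unsplitK (inl _ i)) ?(unsplitK (inr _ i)).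
Qed.

Lemma linZ F k v : lin F v -> lin F (k *: v).
Proof.
move=> [n [a [p [q [Fpq ->]]]]]; exists n, (fun i => k * a i), p, q.
by split=> //; rewrite scaler_sumr; apply: eq_bigr => i _; rewrite scalerA.
Qed.

Lemma linB F u v : F u -> F v -> lin F (u - v).
Proof.
move=> Fu Fv; exists 1%N, (fun _ => 1), (fun _ => u), (fun _ => v).
by rewrite big_ord1 scale1r.
Qed.

Lemma linS F G : F `<=` G -> lin F `<=` lin G.
Proof.
by move=> FG v [n [a [p [q [Fpq ->]]]]]; exists n, a, p, q; split=> // i;
  have [] := Fpq i; split; apply: FG.
Qed.

Lemma dimv_le (U : {vspace vec}) : (\dim U <= d)%N.
Proof. by have := dimvS (subvf U); rewrite dimvf /dim /= mul1n. Qed.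

Lemma lin_vspace F : exists U : {vspace vec}, lin F = [set v | v \in U].
Proof.
(* A subspace of maximal dimension inside lin F is all of lin F. *)
pose P n := `[< exists U : {vspace vec}, \dim U = n /\ forall v, v \in U -> lin F v >].
have P0 : exists n, P n.
  exists 0%N; apply/asboolP; exists 0%VS; split; first exact: dimv0.
  by move=> v; rewrite memv0 => /eqP ->; apply: lin0.
have Pd n : P n -> (n <= d)%N by move/asboolP => [U [<- _]]; apply: dimv_le.
case: (ex_maxnP P0 Pd) => _ /asboolP [U [<- UF]] Umax.
exists U; apply/seteqP; split=> v; last exact: UF.
move=> Fv /=; apply: contraT => Uv.
have UvF : P (\dim (U + <[v]>)).
  apply/asboolP; exists (U + <[v]>)%VS; split=> // w /memv_addP [u Uu [z /vlineP [k ->] ->]].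
  by apply: linD; [apply: UF | apply: linZ].
have : (\dim U < \dim (U + <[v]>))%N.
  rewrite ltn_neqAle (dimv_leqif_eq (addvSl _ _)) dimvS ?addvSl // andbT.
  by apply: contraNneq Uv => ->; apply: (subvP (addvSr U _)); apply: memv_line.
by have := Umax _ UvF; lia.
Qed.

Definition linv F : {vspace vec} := projT1 (cid (lin_vspace F)).

Lemma linvE F : lin F = [set v | v \in linv F].
Proof. exact: (projT2 (cid (lin_vspace F))). Qed.

Lemma linvP F v : lin F v <-> v \in linv F.
Proof. by rewrite linvE. Qed.

Lemma parallel_linv F G : parallel F G <-> linv F = linv G.
Proof.
rewrite /parallel !linvE; split=> [FG | -> //].
by apply/vspaceP => v; have /= FGv := congr1 (@^~ v) FG; apply/idP/idP; rewrite FGv.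
Qed.

Lemma linvS F G : F `<=` G -> (linv F <= linv G)%VS.
Proof. by move=> FG; apply/subvP => v /linvP /(linS FG) /linvP. Qed.

End LinearHull.

Section Faces.
Variables (R : realType) (d : nat).
Notation vec := 'rV[R]_d.
Implicit Types (C F G : set vec) (c u v : vec).

Lemma dotv_is_linear c : scalar (dotv c).
Proof.
move=> k u v; rewrite /dotv mulr_sumr -big_split; apply: eq_bigr => i _.
by rewrite !mxE mulrDr mulrCA.
Qed.

HB.instance Definition _ c := GRing.isLinear.Build R vec R *%R (dotv c) (dotv_is_linear c).

Lemma lin_hyperplane F c b v :
  F `<=` [set p | dotv c p = b] -> lin F v -> dotv c v = 0.
Proof.
move=> Fcb [n [a [p [q [Fpq ->]]]]]; rewrite linear_sum big1 // => i _.
by have [/Fcb/= cp /Fcb/= cq] := Fpq i; rewrite linearZ linearB /= cp cq subrr mulr0.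
Qed.

Lemma face_sub C F : face C F -> F `<=` C.
Proof. by move=> [c [b [_ ->]]] p []. Qed.

Lemma sub_face_of_linvS C F G e : face C G -> F `<=` C -> F e -> G e ->
  (linv F <= linv G)%VS -> F `<=` G.
Proof.
move=> [c [b [_ ->]]] FC Fe [_ /= ce] FG f Ff; split; first exact: FC.
(* f - e lies in lin G, on which the functional cutting out G vanishes. *)
have : lin (C `&` [set p | dotv c p = b]) (f - e).
  by apply/linvP; apply: (subvP FG); apply/linvP; apply: linB.
move=> /(lin_hyperplane (fun p => @proj2 _ _)) /eqP.
by rewrite linearB /= ce subr_eq0 => /eqP.
Qed.

End Faces.

Section UnitCube.
Variables (R : realType) (d : nat).
Notation vec := 'rV[R]_d.
Implicit Types (I J K : {set 'I_d}).

Definition cube_vertex K : vec := \row_i (i \in K)%:R.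

(* %B: classical_set_scope rebinds [disjoint _ & _] to classical sets. *)
Lemma cubeF_vertexP I J K :
  cubeF I J (cube_vertex K) <-> [disjoint I & K]%B /\ J \subset K.
Proof.
split=> [[_ [I0 J1]] | [IK JK]].
  split; [apply/pred0P => k /=; apply/negbTE/andP => -[kI kK] | apply/fintype.subsetP => k kJ].
    by have /eqP := I0 k kI; rewrite mxE kK oner_eq0.
  by have /eqP := J1 k kJ; rewrite mxE; case: (k \in K); rewrite // eq_sym oner_eq0.
split; first by move=> k; rewrite mxE; case: (k \in K); rewrite /= ?lexx ?ler01.
by split=> k kIJ; rewrite mxE ?(disjointFr IK kIJ) ?(fintype.subsetP JK k kIJ).
Qed.

Lemma cubeFS I J I' J' : I' \subset I -> J' \subset J -> @cubeF R d I J `<=` @cubeF R d I' J'.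
Proof.
move=> /fintype.subsetP II' /fintype.subsetP JJ' p [p01 [I0 J1]].
by split=> //; split=> k kIJ; [apply: I0; apply: II' | apply: J1; apply: JJ'].
Qed.

Lemma cube_face0 : face (@unit_cube R d) set0.
Proof.
have dot0 (p : vec) : dotv 0 p = 0 by rewrite /dotv big1 // => i _; rewrite mxE mul0r.
exists 0, 1; split=> [p _|]; first by rewrite dot0 ler01.
by apply/seteqP; split=> p //= [_]; rewrite dot0 => /eqP; rewrite eq_sym oner_eq0.
Qed.

Lemma cubeF_coord_leif I J (p : vec) k : [disjoint I & J]%B -> 0 <= p 0 k <= 1 ->
  ((k \in J)%:R - (k \in I)%:R) * p 0 k <= (k \in J)%:R
    ?= iff ((k \in I) ==> (p 0 k == 0)) && ((k \in J) ==> (p 0 k == 1)).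
Proof.
move=> IJ /andP [p0 p1]; case kJ: (k \in J).
  by rewrite (disjointFl IJ kJ) subr0 mul1r /=; apply: leif_eq.
case: (k \in I); rewrite /= ?subrr ?mul0r ?sub0r ?mulN1r ?andbT; last exact: leif_refl.
by rewrite -oppr_eq0; apply: leif_eq; rewrite oppr_le0.
Qed.

Lemma cubeF_face I J : [disjoint I & J]%B -> face (@unit_cube R d) (cubeF I J).
Proof.
move=> IJ; exists (\row_k ((k \in J)%:R - (k \in I)%:R)), (\sum_k (k \in J)%:R).
have dotvE (p : vec) : unit_cube p ->
    dotv (\row_k ((k \in J)%:R - (k \in I)%:R)) p <= \sum_k (k \in J)%:R
      ?= iff [forall k, ((k \in I) ==> (p 0 k == 0)) && ((k \in J) ==> (p 0 k == 1))].
  by move=> p01; apply: leif_sum => k _; rewrite mxE; apply: cubeF_coord_leif.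
split=> [p /dotvE [] //|].
apply/seteqP; split=> [p [p01 [pI pJ]] | p [p01 /eqP pc]]; split=> //.
  apply/eqP; rewrite (dotvE p p01).2; apply/forallP => k.
  by apply/andP; split; apply/implyP => kIJ; apply/eqP; [apply: pI | apply: pJ].
move: pc; rewrite (dotvE p p01).2 => /forallP pIJ.
by split=> k kIJ; apply/eqP; have /andP [/implyP pI /implyP pJ] := pIJ k; auto.
Qed.

Lemma cubeF_vertex_sep I J I' J' k : [disjoint I & J]%B ->
  I' \subset I -> J' \subset J -> k \in I :|: J -> k \notin I' :|: J' ->
  exists2 K, cubeF I' J' (cube_vertex K) & ~ cubeF I J (cube_vertex K).
Proof.
move=> IJ II' JJ'; rewrite !inE negb_or => kIJ /andP [kI' kJ'].
have [kI | kI] := boolP (k \in I).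
  exists (k |: J); apply/cubeF_vertexP.
    rewrite finset.disjoints_subset; split; apply/fintype.subsetP => z; rewrite !inE.
      move=> zI'; rewrite negb_or (disjointFr IJ (fintype.subsetP II' z zI')) andbT.
      by apply: contraTneq zI' => ->.
    by move=> /(fintype.subsetP JJ') ->; rewrite orbT.
  by move=> [/disjointFr /(_ kI)]; rewrite setU11.
have kJ : k \in J by rewrite (negbTE kI) in kIJ.
exists (J :\ k); apply/cubeF_vertexP.
  split; first exact: disjointW II' (subsetDl J [set k]) IJ.
  apply/fintype.subsetP => z zJ'; rewrite !inE (fintype.subsetP JJ' z zJ') andbT.
  by apply: contraNneq kJ' => <-.
by move=> [_ /fintype.subsetP /(_ k kJ)]; rewrite setD11.
Qed.

End UnitCube.

Section FaceIso.
Variables (R : realType) (d : nat) (C : set 'rV[R]_d) (phi : set 'rV[R]_d -> set 'rV[R]_d).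
Hypothesis iso : face_iso C phi.
Notation vec := 'rV[R]_d.
Notation cube := (@unit_cube R d).
Implicit Types (F G : set vec) (I J : {set 'I_d}).

Lemma phi_face F : face cube F -> face C (phi F).
Proof. by case: iso => phiF _; apply: phiF. Qed.

Lemma phi_subP F G : face cube F -> face cube G -> F `<=` G <-> phi F `<=` phi G.
Proof. by case: iso => _ [_ phiS]; apply: phiS. Qed.

Lemma phiS F G : face cube F -> face cube G -> F `<=` G -> phi F `<=` phi G.
Proof. by move=> cF cG /(phi_subP cF cG). Qed.

Lemma phi_neq0 F p : face cube F -> F p -> exists q, phi F q.
Proof.
move=> cF Fp; apply/not_existsP => phiF0.
have /(phi_subP cF (cube_face0 R d)) /(_ p Fp) // : phi F `<=` phi set0.
by move=> q phiFq; case: (phiF0 q).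
Qed.

Lemma phi_dim_lt F G p q : face cube F -> face cube G -> F `<=` G ->
  F p -> G q -> ~ F q -> (\dim (linv (phi F)) < \dim (linv (phi G)))%N.
Proof.
move=> cF cG FG Fp Gq Fq; have [e phiFe] := phi_neq0 cF Fp.
have phiFG := phiS cF cG FG.
rewrite ltn_neqAle (dimv_leqif_eq (linvS phiFG)) dimvS ?linvS // andbT.
apply/eqP => linvFG; apply: Fq; apply: (phi_subP cG cF).2 Gq.
apply: (sub_face_of_linvS (phi_face cF) (face_sub (phi_face cG)) (phiFG e phiFe) phiFe).
by rewrite linvFG.
Qed.

Lemma phi_cubeF_dim_lt I J I' J' k : [disjoint I & J]%B ->
  I' \subset I -> J' \subset J -> k \in I :|: J -> k \notin I' :|: J' ->
  (\dim (linv (phi (cubeF I J))) < \dim (linv (phi (cubeF I' J'))))%N.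
Proof.
move=> IJ II' JJ' kIJ kIJ'.
have [K K_I'J' K_IJ] := cubeF_vertex_sep R IJ II' JJ' kIJ kIJ'.
apply: (phi_dim_lt (p := cube_vertex R J) _ _ (cubeFS II' JJ') _ K_I'J' K_IJ).
- exact: cubeF_face.
- exact/cubeF_face/(disjointW II' JJ' IJ).
- exact/cubeF_vertexP.
Qed.

Lemma phi_cubeF_dim_ge I J : [disjoint I & J]%B ->
  (d - #|I :|: J| <= \dim (linv (phi (cubeF I J))))%N.
Proof.
have [n] : exists n, #|~: (I :|: J)| = n by eexists.
elim: n I J => [|n IHn] I J cn IJ; have := cardsC (I :|: J); rewrite card_ord cn => cIJ.
  by lia.
have [k] : exists k, k \in ~: (I :|: J) by apply/card_gt0P; rewrite cn.
rewrite inE => kIJ.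
have kI_J : [disjoint k |: I & J]%B.
  rewrite -setI_eq0 finset.setIUl (disjoint_setI0 IJ) finset.setU0 setI_eq0 disjoints1.
  by apply: contra kIJ; rewrite inE orbC => ->.
have ckIJ : #|~: ((k |: I) :|: J)| = n.
  have := cardsC ((k |: I) :|: J); rewrite card_ord -finset.setUA cardsU1 kIJ; lia.
have := IHn (k |: I) J ckIJ kI_J.
have := phi_cubeF_dim_lt kI_J (finset.subsetUr [set k] I) (subxx J) _ kIJ.
rewrite !inE eqxx /= => /(_ isT).
rewrite -finset.setUA cardsU1 kIJ /=; lia.
Qed.

End FaceIso.

Section CoordinateFaces.
Variables (R : realType) (d : nat) (x y : 'I_d).
Hypothesis xy : x != y.
Notation vec := 'rV[R]_d.
Implicit Types a b : bool.

Definition coord_zeros (z : 'I_d) a : {set 'I_d} := (if a then finset.set0 else [set z])%SET.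
Definition coord_ones (z : 'I_d) a : {set 'I_d} := (if a then [set z] else finset.set0)%SET.

Definition coord_facet (z : 'I_d) a : set vec := cubeF (coord_zeros z a) (coord_ones z a).

Definition coord_ridge a b : set vec :=
  cubeF (coord_zeros x a :|: coord_zeros y b) (coord_ones x a :|: coord_ones y b).

Lemma coord_facet_disjoint z a : [disjoint coord_zeros z a & coord_ones z a]%B.
Proof. by rewrite -setI_eq0; case: a; rewrite /= ?finset.setI0 ?finset.set0I. Qed.

Lemma coord_facet_face z a : face (@unit_cube R d) (coord_facet z a).
Proof. exact/cubeF_face/coord_facet_disjoint. Qed.

Lemma coord_ridge_disjoint a b :
  [disjoint coord_zeros x a :|: coord_zeros y b & coord_ones x a :|: coord_ones y b]%B.
Proof.
rewrite -setI_eq0; apply/eqP/setP => z.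
case: a b => -[]; rewrite !inE /= ?orbF ?andbF //.
all: by apply/negbTE/andP => -[/eqP -> /eqP E]; move: xy; rewrite E eqxx.
Qed.

Lemma coord_ridge_face a b : face (@unit_cube R d) (coord_ridge a b).
Proof. exact/cubeF_face/coord_ridge_disjoint. Qed.

Lemma coord_ridge_vertex a b : coord_ridge a b (cube_vertex R (coord_ones x a :|: coord_ones y b)).
Proof. by apply/cubeF_vertexP; split; [apply: coord_ridge_disjoint | apply: subxx]. Qed.

Lemma coord_ridge_sub_facetl a b : coord_ridge a b `<=` coord_facet x a.
Proof. by apply: cubeFS; apply: finset.subsetUl. Qed.

Lemma coord_ridge_sub_facetr a b : coord_ridge a b `<=` coord_facet y b.
Proof. by apply: cubeFS; apply: finset.subsetUr. Qed.

Lemma coord_facet_not_sub a b : ~ coord_facet y b `<=` coord_facet x a.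
Proof.
move=> /(_ _ (coord_ridge_sub_facetr (coord_ridge_vertex (~~ a) b))) /cubeF_vertexP [].
case: a; rewrite /= ?finset.set0U; last by rewrite disjoints1 setU11.
by move=> _; rewrite finset.sub1set; case: b; rewrite ?inE ?(negbTE xy).
Qed.

Lemma coord_ridge_support a b :
  (coord_zeros x a :|: coord_zeros y b) :|: (coord_ones x a :|: coord_ones y b) = [set x; y]%SET.
Proof. by apply/setP => z; case: a b => -[]; rewrite !inE /= ?orbF // orbC. Qed.

End CoordinateFaces.

Section RidgeParallel.
Variables (R : realType) (d : nat) (C : set 'rV[R]_d) (phi : set 'rV[R]_d -> set 'rV[R]_d).
Hypothesis iso : face_iso C phi.
Variables (x y : 'I_d).
Hypothesis xy : x != y.
Notation ridge := (@coord_ridge R d x y).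
Notation facet := (@coord_facet R d).

Lemma phi_coord_ridge_dim a b : (d - 2 <= \dim (linv (phi (ridge a b))))%N.
Proof.
have := phi_cubeF_dim_ge iso (coord_ridge_disjoint xy a b).
by rewrite coord_ridge_support cards2 xy.
Qed.

Lemma phi_coord_facet_dim z a : (\dim (linv (phi (facet z a))) < d)%N.
Proof.
apply: leq_trans (dimv_le (linv (phi (cubeF finset.set0 finset.set0)))).
apply: (phi_cubeF_dim_lt iso (k := z) (coord_facet_disjoint z a));
  rewrite ?finset.sub0set ?inE //.
by case: a; rewrite /= set11 ?orbT.
Qed.

Lemma phi_coord_ridge_parallel a b :
  parallel (phi (ridge (~~ a) b)) (phi (ridge a (~~ b))) ->
  parallel (phi (ridge a b)) (phi (ridge (~~ a) b)).
Proof.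
rewrite !parallel_linv => par; apply/eqP; apply: contraT => neq.
set E := linv (phi (ridge a b)); set A := linv (phi (ridge (~~ a) b)).
have spanE z c a' b' : ridge a b `<=` facet z c -> ridge a' b' `<=` facet z c ->
    linv (phi (ridge a' b')) = A -> (E + A)%VS = linv (phi (facet z c)).
  move=> EF AF AA'; apply: (addv_eq_of_dim (m := d - 2)) => //.
  - exact: phi_coord_ridge_dim.
  - exact: phi_coord_ridge_dim.
  - rewrite subv_add -AA'; apply/andP; split; apply/linvS/(phiS iso) => //;
      by [apply: coord_ridge_face | apply: coord_facet_face].
  - by rewrite -ltnS; apply: leq_trans (phi_coord_facet_dim z c) _; lia.
have Fy : (E + A)%VS = linv (phi (facet y b)).
  by apply: (spanE _ _ (~~ a) b) => //; apply: coord_ridge_sub_facetr.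
have Fx : (E + A)%VS = linv (phi (facet x a)).
  by apply: (spanE _ _ a (~~ b)) => //; apply: coord_ridge_sub_facetl.
have cE := coord_ridge_face R xy a b.
have cFx := coord_facet_face R x a; have cFy := coord_facet_face R y b.
have [e Ee] := phi_neq0 iso cE (coord_ridge_vertex R xy a b).
exfalso; apply: (coord_facet_not_sub xy (a := a) (b := b)); apply/(phi_subP iso cFy cFx).
apply: (sub_face_of_linvS (e := e) (phi_face iso cFx) (face_sub (phi_face iso cFy))).
- by apply: (phiS iso cE cFy) Ee; apply: coord_ridge_sub_facetr.
- by apply: (phiS iso cE cFx) Ee; apply: coord_ridge_sub_facetl.
- by rewrite -Fx -Fy.
Qed.

End RidgeParallel.

Lemma ridge_index_subproof (a b : bool) : (a.*2 + b < 4)%N.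
Proof. by case: a; case: b. Qed.

(* [quad] lists the ridges (a, b) = (0,0), (0,1), (1,0), (1,1), i.e. at index 2a + b. *)

Definition ridge_index (a b : bool) : 'I_4 := Ordinal (ridge_index_subproof a b).

Lemma ridge_indexP (i : 'I_4) : exists a b, i = ridge_index a b.
Proof.
case: i => -[|[|[|[|//]]]] i4;
  [exists false, false | exists false, true | exists true, false | exists true, true];
  exact: val_inj.
Qed.

Lemma ridge_index_flipl a b : ridge_index (~~ a) b != ridge_index a b.
Proof. by case: a; case: b. Qed.

Lemma ridge_index_flipr a b : ridge_index a (~~ b) != ridge_index a b.
Proof. by case: a; case: b. Qed.

Lemma quad_ridge_index (R : realType) (d : nat) (phi : set 'rV[R]_d -> set 'rV[R]_d) x y a b :
  quad phi x y (ridge_index a b) = phi (coord_ridge x y a b).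
Proof. by case: a; case: b; rewrite /coord_ridge /= ?finset.setU0 ?finset.set0U. Qed.

Theorem corollary3p4 (R : realType) (d : nat) (C : set 'rV[R]_d)
    (phi : set 'rV[R]_d -> set 'rV[R]_d) (x y : 'I_d) :
  (3 <= d)%N ->
  lattice_polytope C -> full_dim C -> smooth C -> face_iso C phi ->
  x != y ->
  forall i : 'I_4,
    (forall j k : 'I_4, j != i -> k != i -> parallel (quad phi x y j) (quad phi x y k)) ->
    forall j : 'I_4, parallel (quad phi x y i) (quad phi x y j).
Proof.
move=> _ _ _ _ iso xy i; have [a [b ->]] := ridge_indexP i; move=> par j.
have par_i : parallel (quad phi x y (ridge_index a b)) (quad phi x y (ridge_index (~~ a) b)).
  rewrite !quad_ridge_index; apply: (phi_coord_ridge_parallel iso xy).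
  by rewrite -!quad_ridge_index; apply: par; rewrite ?ridge_index_flipl ?ridge_index_flipr.
have [-> // | ji] := eqVneq j (ridge_index a b).
by move: par_i; rewrite /parallel => ->; apply: par; rewrite ?ridge_index_flipl.
Qed.
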